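(* In the modified market (with virtual buyers) described in the context, let $x^*\in\mathbb R^N_+$ be defined recursively, processing buyers in decreasing order of valuation with ties broken by index, by $$x^*_i=\min\Bigl(\frac{B_i}{v_i},\ \min_{H\subseteq H_i}\{f(E_{H\cup\{i\}})-x^*(H)\}\Bigr)\qquad(i\in N).$$ Then $x^*$ is an optimal allocation for liquid welfare: there is $w^*\in P$ with $w^*(E_i)=x^*_i$ for all $i\in N$, and $\sum_{i\in N}\min(v_ix^*_i,B_i)=\max_{w\in P}\sum_{i\in N}\min(v_iw(E_i),B_i)$. Moreover $x^*(N)=f(E_N)$.
   Context: Market model. Buyers $N_0=\{1,\dots,n\}$, sellers $M=\{1,\dots,m\}$, bipartite edge set $E_0\subseteq N_0\times M$; edge $(i,j)$ written $ij$; for a set $S$ of participants $E_S$ is the set of edges incident to a member of $S$; for a vector $w$ and a set $F$, $w(F)=\sum_{e\in F}w_e$. Each seller $j$ has a monotone submodular $f_j:2^{E_j}\to\mathbb R_+$ with $f_j(\emptyset)=0$ ($f_j(E_j)$ is her total amount of a homogeneous divisible good). Buyer $i$ has per-unit valuation $v_i>0$ and budget $B_i\ge0$; seller $j$ has per-unit valuation $\rho_j>0$. Modified market. For each seller $j$ add a virtual buyer $n+j$ adjacent only to $j$, with $v_{n+j}=\rho_j$ and $B_{n+j}=\infty$ (so $B_{n+j}/v_{n+j}=\infty$). Let $N=\{1,\dots,n+m\}$, $E=E_0\cup\{(n+j)j:j\in M\}$, and extend $f_j$ to subsets $F$ of $E_j$ (now including the edge $(n+j)j$) by $f_j(F)=f_j(E_j)$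 if $(n+j)j\in F$ and $f_j(F)$ unchanged otherwise. Let $P=\{w\in\mathbb R^E_+: w|_{E_j}\in P_j\ \forall j\}$ where $P_j=\{y\in\mathbb R^{E_j}_+: y(F)\le f_j(F)\ \forall F\subseteq E_j\}$, and $f(S)=\sum_{j\in M}f_j(S\cap E_j)$ for $S\subseteq E$. For $i\in N$, $H_i$ is the set of buyers $k\in N$ with $v_k>v_i$, or with $v_k=v_i$ and $k<i$. *)

From HB Require Import structures.
From mathcomp Require Import all_boot all_order all_algebra.
Set Implicit Arguments. Unset Strict Implicit. Unset Printing Implicit Defensive.
Import Order.TTheory GRing.Theory Num.Theory.
Local Open Scope ring_scope.

Section Market.
Variable R : realFieldType.
Variables n m : nat.
Variable E0 : {set 'I_n * 'I_m}.
Variable f : 'I_m -> {set 'I_n * 'I_m} -> R.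
Variable v : 'I_n -> R.
Variable B : 'I_n -> R.
Variable rho : 'I_m -> R.

Definition E0j (j : 'I_m) : {set 'I_n * 'I_m} := [set e in E0 | e.2 == j].

(* Modified market: buyers N = 'I_(n+m); buyer lshift m i is original buyer i,
   buyer rshift n j is the virtual buyer n+j of seller j. *)
Definition Edge := ('I_(n + m) * 'I_m)%type.
Definition lift0 (e : 'I_n * 'I_m) : Edge := (lshift m e.1, e.2).
Definition vedge (j : 'I_m) : Edge := (rshift n j, j).

Definition Em : {set Edge} := (lift0 @: E0) :|: [set vedge j | j : 'I_m].
Definition Emj (j : 'I_m) : {set Edge} := [set e in Em | e.2 == j].
Definition ES (S : {set 'I_(n + m)}) : {set Edge} := [set e in Em | e.1 \in S].

Definition fext (j : 'I_m) (F : {set Edge}) : R :=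
  if vedge j \in F then f j (E0j j) else f j [set e | lift0 e \in F].

Definition fm (S : {set Edge}) : R := \sum_(j < m) fext j (S :&: Emj j).

Definition wsum (w : Edge -> R) (F : {set Edge}) : R := \sum_(e in F) w e.

(* the polymatroid P (vectors indexed by E, represented as functions on Edge
   vanishing off E) *)
Definition inP (w : Edge -> R) : Prop :=
  [/\ forall e, e \notin Em -> w e = 0,
      forall e, 0 <= w e &
      forall j (F : {set Edge}), F \subset Emj j -> wsum w F <= fext j F].

Definition vm (i : 'I_(n + m)) : R :=
  match split i with inl i' => v i' | inr j => rho j end.

Definition Hset (i : 'I_(n + m)) : {set 'I_(n + m)} :=
  [set k | (vm i < vm k) || ((vm k == vm i) && (k < i)%N)].

(* the right-hand side of the recursive definition of x*_i; the budget term
   B_i/v_i is +oo for virtual buyers.  The inner minimum over H ⊆ H_i is taken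
   with the (H = ∅)-term as neutral element, which does not change its value. *)
Definition xrhs (x : 'I_(n + m) -> R) (i : 'I_(n + m)) : R :=
  let t := \big[Num.min/fm (ES [set i])]_(H : {set 'I_(n + m)} | H \subset Hset i)
             (fm (ES (i |: H)) - \sum_(k in H) x k) in
  match split i with inl i' => Num.min (B i' / v i') t | inr _ => t end.

(* per-buyer liquid welfare term min(v_i t, B_i) (B_i = +oo for virtual) *)
Definition lwterm (i : 'I_(n + m)) (t : R) : R :=
  match split i with inl i' => Num.min (v i' * t) (B i') | inr j => rho j * t end.

Definition LW (w : Edge -> R) : R :=
  \sum_(i < n + m) lwterm i (wsum w (ES [set i])).

End Market.

(* The vector x* is the greedy vector, in priority order, of the polymatroid of
   g(S) = f(E_S) on buyers, truncated by the budgets: every buyer is either capped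
   by its budget or lies in a tight set together with some of its predecessors.
   Tight sets are closed under union, so each prefix of the priority order contains
   a maximal tight set outside of which all buyers are capped; hence x* dominates,
   on every prefix, the budget-capped demand of any feasible w, and Abel summation
   against the non-increasing valuations gives optimality.  Virtual buyers are never
   capped, so the maximal tight set contains them and has rank f(E_N).  Finally x*
   is realised by an edge allocation because g is a sum over sellers of polymatroid
   rank functions, and a point of the polymatroid of a sum splits into points of the
   summands (fixing one coordinate at a time). *)

From Pilot Require Import Defs.
From HB Require Import structures.
From mathcomp Require Import all_boot all_order all_algebra.
From mathcomp Require Import lra.
Import Order.TTheory GRing.Theory Num.Theory.
Set Implicit Arguments. Unset Strict Implicit. Unset Printing Implicit Defensive.
Local Open Scope ring_scope.

Section SetFunctions.
Variables (R : realFieldType) (I : finType).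
Implicit Types (A B D S T : {set I}) (g : {set I} -> R) (x y : I -> R).

Lemma le_add_mins (c p q r s : R) :
  c <= p + r -> c <= p + s -> c <= q + r -> c <= q + s ->
  c <= Num.min p q + Num.min r s.
Proof. by rewrite !minEle; case: ifP => _; case: ifP. Qed.

Lemma bigmin_attained (J : finType) (P : pred J) (F : J -> R) j0 :
  P j0 -> exists2 j, P j & \big[Num.min/F j0]_(j | P j) F j = F j.
Proof.
move=> Pj0; apply: (big_ind (fun z => exists2 j, P j & z = F j)); last 1 first.
- by move=> j Pj; exists j.
- by exists j0.
by move=> _ _ [i Pi ->] [j Pj ->]; rewrite minEle; case: ifP => _; [exists i | exists j].
Qed.

(* [a] is the minimum of [z] and all [t1 j], and [b] takes the rest of [z]. *)
Lemma exists_split_below (J : finType) (P : pred J) (z : R) (t1 t2 : J -> R) :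
  0 <= z -> (forall j, P j -> 0 <= t1 j) -> (forall k, P k -> 0 <= t2 k) ->
  (forall j k, P j -> P k -> z <= t1 j + t2 k) ->
  exists a b, [/\ 0 <= a, 0 <= b, a + b = z,
    forall j, P j -> a <= t1 j & forall k, P k -> b <= t2 k].
Proof.
move=> z0 t1_ge0 t2_ge0 cross.
pose a := \big[Num.min/z]_(j | P j) t1 j.
have a_le_z : a <= z by apply: bigmin_le_id.
exists a, (z - a); split.
- by apply: le_bigmin => // j /t1_ge0.
- by rewrite subr_ge0.
- by rewrite addrC subrK.
- by move=> j Pj; apply: bigmin_le_cond.
move=> k Pk; suff : z - t2 k <= a by lra.
apply: le_bigmin => [|j Pj]; first by have := t2_ge0 k Pk; lra.
by have := cross j k Pj Pk; lra.
Qed.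

Lemma sumr_setUI x A B :
  \sum_(i in A :|: B) x i + \sum_(i in A :&: B) x i =
  \sum_(i in A) x i + \sum_(i in B) x i.
Proof.
rewrite (big_setID A) [\sum_(i in B) _](big_setID A) /= setUK setDUl setDv set0U setIC.
by rewrite -addrA (addrC (\sum_(i in B :\: A) x i)).
Qed.

Lemma sum_setT x : \sum_(i in [set: I]) x i = \sum_i x i.
Proof. by apply: eq_bigl => i; rewrite inE. Qed.

Lemma setU1I_notin (e : I) A B : e \notin B -> (e |: A) :&: B = A :&: B.
Proof.
by move=> eB; apply/setP => i; rewrite !inE; case: eqP => // ->; rewrite (negbTE eB) !andbF.
Qed.

Definition monotone_on D g := forall A B, A \subset B -> B \subset D -> g A <= g B.

Definition submodular_on D g :=
  forall A B, A \subset D -> B \subset D -> g (A :|: B) + g (A :&: B) <= g A + g B.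

Definition polymatroid_on D g := [/\ g set0 = 0, monotone_on D g & submodular_on D g].

Definition in_polymatroid D g x :=
  {in D, forall i, 0 <= x i} /\ forall S, S \subset D -> \sum_(i in S) x i <= g S.

Definition tight g x A := \sum_(i in A) x i = g A.

Lemma polymatroid_on_sum (J : Type) (r : seq J) D (gs : J -> {set I} -> R) :
  (forall j, polymatroid_on D (gs j)) ->
  polymatroid_on D (fun S => \sum_(j <- r) gs j S).
Proof.
move=> gsP; split.
- by apply: big1 => j _; case: (gsP j).
- by move=> A B AB BD; apply: ler_sum => j _; case: (gsP j) => _ + _; apply.
- move=> A B AD BD; rewrite -!big_split; apply: ler_sum => j _.
  by case: (gsP j) => _ _; apply.
Qed.

(* [y] together with the value [a] at [e] lies in the polymatroid of [g] on [D]
   iff [y] lies in the polymatroid of [fiber_rank e a g] on [D :\ e]. *)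
Definition fiber_rank (e : I) (a : R) g S := Num.min (g S) (g (e |: S) - a).

Section Fiber.
Variables (D : {set I}) (e : I).
Hypothesis eD : e \in D.

Lemma notin_subsetD1 S : S \subset D :\ e -> e \notin S.
Proof. by move=> /subsetP SD; apply/negP => /SD; rewrite setD11. Qed.

Lemma subsetD1_setU1 S : S \subset D :\ e -> e |: S \subset D.
Proof. by move=> SD; rewrite subUset sub1set eD (subset_trans SD) ?subD1set. Qed.

Lemma fiber_rank_polymatroid a g : polymatroid_on D g -> 0 <= a -> a <= g [set e] ->
  polymatroid_on (D :\ e) (fiber_rank e a g).
Proof.
move=> [g0 gmono gsub] a0 a_le; split.
- by rewrite /fiber_rank setU0 g0; apply/min_idPl; lra.
- move=> A B AB BD'; rewrite /fiber_rank le_min !ge_min.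
  rewrite gmono ?(subset_trans BD') ?subD1set //=.
  by rewrite lerD2r gmono ?orbT ?setUS ?subsetD1_setU1.
move=> A B AD' BD'; rewrite /fiber_rank.
have [AD BD] := (subset_trans AD' (subD1set D e), subset_trans BD' (subD1set D e)).
have [eA eB] := (notin_subsetD1 AD', notin_subsetD1 BD').
have ge_min2 (p q : R) : Num.min p q <= p /\ Num.min p q <= q.
  by rewrite !ge_min !lexx orbT.
have [minU1 minU2] := ge_min2 (g (A :|: B)) (g (e |: (A :|: B)) - a).
have [minI1 minI2] := ge_min2 (g (A :&: B)) (g (e |: (A :&: B)) - a).
apply: le_add_mins.
- by have := gsub _ _ AD BD; lra.
- have := gsub _ _ AD (subsetD1_setU1 BD').
  by rewrite setUCA [A :&: _]setIC setU1I_notin // setIC; lra.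
- have := gsub _ _ (subsetD1_setU1 AD') BD.
  by rewrite -setUA setU1I_notin //; lra.
- have := gsub _ _ (subsetD1_setU1 AD') (subsetD1_setU1 BD').
  by rewrite -setUA [A :|: _]setUCA setUA setUid -setUIr; lra.
Qed.

Lemma in_polymatroid_fiber_extend a g y : 0 <= a ->
  in_polymatroid (D :\ e) (fiber_rank e a g) y ->
  in_polymatroid D g (fun i => if i == e then a else y i).
Proof.
move=> a0 [y_ge0 y_le]; split=> [i iD|S SD].
  by case: eqP => // /eqP ie; apply: y_ge0; rewrite !inE ie.
case eS: (e \in S).
- rewrite (big_setD1 e eS) eqxx /= (eq_bigr y) => [|i]; last first.
    by rewrite !inE => /andP [/negbTE ->].
  have := y_le (S :\ e) (setSD _ SD); rewrite /fiber_rank setD1K //.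
  have : Num.min (g (S :\ e)) (g S - a) <= g S - a by rewrite ge_min lexx orbT.
  lra.
have SD' : S \subset D :\ e by rewrite subsetD1 SD eS.
rewrite (eq_bigr y) => [|i iS]; last by case: eqP => // ie; rewrite -ie iS in eS.
by apply: le_trans (y_le S SD') _; rewrite ge_min lexx.
Qed.

End Fiber.

Section PolymatroidSum.
Variables (D : {set I}) (g1 g2 : {set I} -> R) (x : I -> R).
Hypotheses (g1P : polymatroid_on D g1) (g2P : polymatroid_on D g2).
Hypothesis xP : in_polymatroid D (fun S => g1 S + g2 S) x.
Variable e : I.
Hypothesis eD : e \in D.

Lemma polymatroid_cross_bound S T : S \subset D :\ e -> T \subset D :\ e ->
  x e <= (g1 (e |: S) + g2 S - \sum_(i in S) x i) +
         (g2 (e |: T) + g1 T - \sum_(i in T) x i).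
Proof.
move=> SD' TD'; have [_ _ g1sub] := g1P; have [_ _ g2sub] := g2P; have [_ xle] := xP.
have [SD TD] := (subset_trans SD' (subD1set D e), subset_trans TD' (subD1set D e)).
have [eS eT] := (notin_subsetD1 SD', notin_subsetD1 TD').
have STD' : S :|: T \subset D :\ e by rewrite subUset SD'.
have := g1sub _ _ (subsetD1_setU1 eD SD') TD; rewrite -setUA setU1I_notin //.
have := g2sub _ _ SD (subsetD1_setU1 eD TD').
rewrite setUCA [S :&: _]setIC setU1I_notin // setIC.
have := xle _ (subsetD1_setU1 eD STD'); rewrite (big_setU1 _ (notin_subsetD1 STD')) /=.
have := xle (S :&: T) (subset_trans (subsetIl S T) SD).
have := sumr_setUI x S T; lra.
Qed.

Lemma exists_fiber_split : exists a b,
  [/\ 0 <= a <= g1 [set e], 0 <= b <= g2 [set e], a + b = x e &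
      in_polymatroid (D :\ e) (fun S => fiber_rank e a g1 S + fiber_rank e b g2 S) x].
Proof.
have [g10 g1mono _] := g1P; have [g20 g2mono _] := g2P; have [x_ge0 xle] := xP.
pose t1 S := g1 (e |: S) + g2 S - \sum_(i in S) x i.
pose t2 S := g2 (e |: S) + g1 S - \sum_(i in S) x i.
have sub_D S : S \subset D :\ e -> S \subset D by move/subset_trans; apply; exact: subD1set.
have t1_ge0 S : S \subset D :\ e -> 0 <= t1 S.
  move=> SD'; have := xle _ (sub_D _ SD').
  by have := g1mono _ _ (subsetU1 e S) (subsetD1_setU1 eD SD'); rewrite /t1; lra.
have t2_ge0 S : S \subset D :\ e -> 0 <= t2 S.
  move=> SD'; have := xle _ (sub_D _ SD').
  by have := g2mono _ _ (subsetU1 e S) (subsetD1_setU1 eD SD'); rewrite /t2; lra.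
have [a [b [a0 b0 ab a_le b_le]]] := exists_split_below (x_ge0 e eD) t1_ge0 t2_ge0
  polymatroid_cross_bound.
have [a_t1 b_t2] := (a_le set0 (sub0set _), b_le set0 (sub0set _)).
rewrite /t1 /t2 !setU0 g10 g20 big_set0 !subr0 !addr0 in a_t1 b_t2.
exists a, b; split; rewrite ?a0 ?b0 //; split=> [i /setD1P [_ /x_ge0] //|S SD'].
have := xle _ (subsetD1_setU1 eD SD'); rewrite (big_setU1 _ (notin_subsetD1 SD')) /= => xle_eS.
apply: le_add_mins; first exact: xle (sub_D _ SD').
- by have := b_le S SD'; rewrite /t2; lra.
- by have := a_le S SD'; rewrite /t1; lra.
- lra.
Qed.

End PolymatroidSum.

Lemma polymatroid_sum_split D g1 g2 x :
  polymatroid_on D g1 -> polymatroid_on D g2 ->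
  in_polymatroid D (fun S => g1 S + g2 S) x ->
  exists y1 y2, [/\ {in D, forall i, y1 i + y2 i = x i},
                    in_polymatroid D g1 y1 & in_polymatroid D g2 y2].
Proof.
move: {2}#|D| (erefl #|D|) => k; elim: k D g1 g2 x => [|k IH] D g1 g2 x cardD g1P g2P xP.
  move: cardD => /eqP; rewrite cards_eq0 => /eqP ->.
  have [[g10 _ _] [g20 _ _]] := (g1P, g2P).
  exists (fun=> 0), (fun=> 0); split; first by move=> i; rewrite inE.
    by split=> [//|S]; rewrite subset0 => /eqP ->; rewrite big_set0 g10.
  by split=> [//|S]; rewrite subset0 => /eqP ->; rewrite big_set0 g20.
have [e eD] : exists e, e \in D by apply/card_gt0P; rewrite cardD.
have [a [b [/andP [a0 a_le] /andP [b0 b_le] ab xP']]] := exists_fiber_split g1P g2P xP eD.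
have cardD' : #|D :\ e| = k by move: cardD; rewrite (cardsD1 e) eD => -[].
have [y1 [y2 [y12 y1P y2P]]] := IH _ _ _ _ cardD'
  (fiber_rank_polymatroid eD g1P a0 a_le) (fiber_rank_polymatroid eD g2P b0 b_le) xP'.
exists (fun i => if i == e then a else y1 i), (fun i => if i == e then b else y2 i).
split; [|exact: in_polymatroid_fiber_extend | exact: in_polymatroid_fiber_extend].
by move=> i iD; case: eqP => [-> //|/eqP ie]; apply: y12; rewrite !inE ie.
Qed.

Lemma polymatroid_bigsum_split (J : eqType) (r : seq J) D (gs : J -> {set I} -> R) x :
  uniq r -> (forall j, polymatroid_on D (gs j)) ->
  in_polymatroid D (fun S => \sum_(j <- r) gs j S) x ->
  exists y : J -> I -> R, {in D, forall i, \sum_(j <- r) y j i = x i} /\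
    forall j, j \in r -> in_polymatroid D (gs j) (y j).
Proof.
move=> + gsP; elim: r x => [|j r IH] x /=.
  move=> _ [x_ge0 xle]; exists (fun _ _ => 0); split=> // i iD.
  rewrite big_nil; apply/eqP; rewrite eq_le x_ge0 //=.
  by have := xle [set i]; rewrite sub1set big_set1 big_nil; apply.
move=> /andP [jr ur] [x_ge0 xle].
have xP : in_polymatroid D (fun S => gs j S + \sum_(j' <- r) gs j' S) x.
  by split=> // S SD; have := xle S SD; rewrite big_cons.
have [yj [yr [yx yjP yrP]]] := polymatroid_sum_split (gsP j) (polymatroid_on_sum r gsP) xP.
have [y [y_sum yP]] := IH yr ur yrP.
exists (fun j' => if j' == j then yj else y j'); split.
  move=> i iD; rewrite big_cons eqxx -yx // -y_sum //; congr (_ + _).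
  by apply: eq_big_seq => j' j'r; case: eqP => // ej; rewrite -ej j'r in jr.
by move=> j'; rewrite inE; case: eqP => [-> _ //|_ /= j'r]; apply: yP.
Qed.

End SetFunctions.

Section PriorityOrder.
Variables (R : realFieldType) (I : finType) (H : I -> {set I}).
Implicit Types (A B D Q S T Hk : {set I}).
Hypothesis H_irr : forall i, i \notin H i.
Hypothesis H_trans : forall i j k, j \in H i -> k \in H j -> k \in H i.
Hypothesis H_total : forall i k, i != k -> k \in H i \/ i \in H k.

(* An element with the most predecessors comes last. *)
Lemma exists_last (D : {set I}) l0 :
  l0 \in D -> exists2 l, l \in D & forall k, k \in D -> k != l -> k \in H l.
Proof.
move=> l0D; case: (arg_maxnP (fun l => #|H l|) l0D) => l lD lmax.
exists l => // k kD kl; have lk : l != k by rewrite eq_sym.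
have [//|{}lk] := H_total lk.
have HlHk : H l \proper H k.
  apply/properP; split; last by exists l; rewrite ?H_irr.
  by apply/subsetP => j; exact: H_trans lk.
by have /= := lmax k kD; rewrite leqNgt (proper_card HlHk).
Qed.

Lemma sum_le_of_prefix_bound (g : {set I} -> R) (x : I -> R) :
  0 <= g set0 ->
  (forall k (Hk : {set I}), Hk \subset H k -> x k + \sum_(i in Hk) x i <= g (k |: Hk)) ->
  forall S, \sum_(i in S) x i <= g S.
Proof.
move=> g0 x_le S; case: (set_0Vmem S) => [->|[l0 l0S]]; first by rewrite big_set0.
have [l lS lmax] := exists_last l0S.
rewrite (big_setD1 l lS) /= -{2}(setD1K lS); apply: x_le.
by apply/subsetP => k; rewrite in_setD1 => /andP [kl kS]; exact: lmax.
Qed.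

(* Abel summation: peel off the last element [l] and shift the weights by [u l]. *)
Lemma weighted_sum_ge0 (u d : I -> R) (D : {set I}) :
  (forall i k, k \in H i -> u i <= u k) -> {in D, forall i, 0 <= u i} ->
  {in D, forall i, 0 <= \sum_(k in D :&: (i |: H i)) d k} ->
  0 <= \sum_(i in D) u i * d i.
Proof.
move: {2}#|D| (erefl #|D|) => c; elim: c D u => [|c IH] D u cardD u_anti u_ge0 d_pre.
  by move: cardD => /eqP; rewrite cards_eq0 => /eqP ->; rewrite big_set0.
have [l0 l0D] : exists l0, l0 \in D by apply/card_gt0P; rewrite cardD.
have [l lD lmax] := exists_last l0D.
have pre_l : D :&: (l |: H l) = D.
  apply/setIidPl/subsetP => k kD; rewrite in_setU1.
  by case: (k =P l) => [//|/eqP kl]; rewrite lmax.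
rewrite (eq_bigr (fun i => u l * d i + (u i - u l) * d i)); last first.
  by move=> i _; rewrite -mulrDl addrC subrK.
rewrite big_split /= -mulr_sumr [X in _ + X](big_setD1 l lD) /= subrr mul0r add0r.
apply: addr_ge0; first by rewrite mulr_ge0 ?u_ge0 //; have := d_pre l lD; rewrite pre_l.
apply: (IH _ (fun i => u i - u l)).
- by move: cardD; rewrite (cardsD1 l) lD => -[].
- by move=> i k /u_anti; rewrite lerD2r.
- by move=> i /setD1P [il iD]; rewrite subr_ge0 u_anti ?lmax.
move=> i /setD1P [il iD]; have := d_pre i iD; congr (0 <= _); apply: eq_bigl => k.
rewrite !inE; case: (k =P l) => [->|//]; rewrite lD eq_sym (negbTE il) /=.
by apply/negbTE/negP => li; have := H_irr i; rewrite (H_trans li (lmax i iD il)).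
Qed.

Section Greedy.
Variables (g : {set I} -> R) (x : I -> R) (capped : I -> Prop).
Hypotheses (g_submod : submodular_on setT g) (g0 : g set0 = 0).
Hypothesis x_le : forall S, \sum_(i in S) x i <= g S.
Hypothesis x_capped_or_tight :
  forall k, capped k \/ exists2 Hk : {set I}, Hk \subset H k & tight g x (k |: Hk).

Lemma tight_setU A B : tight g x A -> tight g x B -> tight g x (A :|: B).
Proof.
rewrite /tight => tA tB; apply/eqP; rewrite eq_le x_le /=.
have := sumr_setUI x A B; have := g_submod (subsetT A) (subsetT B).
by have := x_le (A :&: B); lra.
Qed.

Lemma exists_maximal_tight (Q : {set I}) : (forall k, k \in Q -> H k \subset Q) ->
  exists T, [/\ T \subset Q, tight g x T & forall k, k \in Q -> k \notin T -> capped k].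
Proof.
move=> Q_down; pose P T := (T \subset Q) && (\sum_(i in T) x i == g T).
have P0 : P set0 by rewrite /P sub0set big_set0 g0 eqxx.
case: (arg_maxnP (fun T => #|T|) P0) => T /andP [TQ /eqP tT] Tmax.
exists T; split => // k kQ kT; case: (x_capped_or_tight k) => // -[Hk HkH tk].
have : P (T :|: (k |: Hk)).
  rewrite /P !subUset TQ sub1set kQ (subset_trans HkH (Q_down k kQ)) /=.
  by apply/eqP; apply: tight_setU.
move=> /Tmax /=; rewrite leqNgt => /negP []; apply: proper_card.
by apply/properP; split; [exact: subsetUl | exists k; rewrite ?inE ?eqxx ?orbT].
Qed.

Lemma sum_le_greedy_downset (x' : I -> R) (Q : {set I}) :
  (forall S, \sum_(i in S) x' i <= g S) -> (forall k, capped k -> x' k <= x k) ->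
  (forall k, k \in Q -> H k \subset Q) -> \sum_(i in Q) x' i <= \sum_(i in Q) x i.
Proof.
move=> x'_le x'_capped Q_down; have [T [TQ tT Tc]] := exists_maximal_tight Q_down.
rewrite (big_setID T) [X in _ <= X](big_setID T) /= (setIidPr TQ).
apply: lerD; first by rewrite tT; exact: x'_le.
by apply: ler_sum => k /setDP [kQ kT]; exact/x'_capped/Tc.
Qed.

Lemma weighted_sum_le_greedy (u x' : I -> R) :
  (forall i k, k \in H i -> u i <= u k) -> (forall i, 0 <= u i) ->
  (forall S, \sum_(i in S) x' i <= g S) -> (forall k, capped k -> x' k <= x k) ->
  \sum_i u i * x' i <= \sum_i u i * x i.
Proof.
move=> u_anti u_ge0 x'_le x'_capped; rewrite -subr_ge0 -sumrB.
under eq_bigr do rewrite -mulrBr.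
rewrite -sum_setT; apply: weighted_sum_ge0 => // i _.
have pre_down k : k \in i |: H i -> H k \subset i |: H i.
  case/setU1P => [->|ki]; first exact: subsetU1.
  by apply/subsetP => j jk; rewrite setU1r // (H_trans ki jk).
by rewrite setTI sumrB subr_ge0 sum_le_greedy_downset.
Qed.

End Greedy.
End PriorityOrder.

Section Market.
Variables (R : realFieldType) (n m : nat).
Variables (E0 : {set 'I_n * 'I_m}) (f : 'I_m -> {set 'I_n * 'I_m} -> R).
Variables (v B : 'I_n -> R) (rho : 'I_m -> R).
Hypotheses (hv : forall i, 0 < v i) (hB : forall i, 0 <= B i) (hrho : forall j, 0 < rho j).
Hypothesis hf0 : forall j, f j set0 = 0.
Hypothesis hfmono : forall j (F G : {set 'I_n * 'I_m}),
  F \subset G -> G \subset E0j E0 j -> f j F <= f j G.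
Hypothesis hfsub : forall j (F G : {set 'I_n * 'I_m}),
  F \subset E0j E0 j -> G \subset E0j E0 j -> f j (F :|: G) + f j (F :&: G) <= f j F + f j G.

Local Notation N := 'I_(n + m).
Implicit Types (S X Y : {set N}) (F G : {set Edge n m}) (w : Edge n m -> R).

Lemma in_ES e S : (e \in ES E0 S) = (e \in Em E0) && (e.1 \in S).
Proof. by rewrite in_set. Qed.

Lemma in_Emj e j : (e \in Emj E0 j) = (e \in Em E0) && (e.2 == j).
Proof. by rewrite in_set. Qed.

Lemma lift0_in_Em (e : 'I_n * 'I_m) : (Defs.lift0 e \in Em E0) = (e \in E0).
Proof.
rewrite in_setU mem_imset; last by move=> [a b] [a' b'] [/ord_inj -> ->].
suff /negbTE -> : Defs.lift0 e \notin [set vedge n j | j : 'I_m] by rewrite orbF.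
by apply/imsetP => -[j _ /(congr1 fst) /eqP]; rewrite eq_lrshift.
Qed.

Lemma lift0_preim_subset j F :
  F \subset Emj E0 j -> [set e | Defs.lift0 e \in F] \subset E0j E0 j.
Proof.
move=> FE; apply/subsetP => e; rewrite inE => /(subsetP FE).
by rewrite in_Emj lift0_in_Em inE.
Qed.

Lemma fext_polymatroid j : polymatroid_on (Emj E0 j) (fext E0 f j).
Proof.
split.
- rewrite /fext in_set0 -(hf0 j); congr (f j _).
  by apply/setP => e; rewrite !inE.
- move=> F G FG GE; rewrite /fext.
  case vF: (vedge n j \in F); first by rewrite (subsetP FG _ vF).
  case: ifP => _; first by apply: hfmono (lift0_preim_subset (subset_trans FG GE)) _.
  apply: hfmono (lift0_preim_subset GE).
  by apply/subsetP => e; rewrite !inE; apply: (subsetP FG).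
move=> F G FE GE; rewrite /fext !inE.
have [pF pG] := (lift0_preim_subset FE, lift0_preim_subset GE).
case: (vedge n j \in F); case: (vedge n j \in G) => /=.
- exact: lexx.
- rewrite lerD2l; apply: hfmono pG.
  by apply/subsetP => e; rewrite !inE => /andP [].
- rewrite addrC lerD2r; apply: hfmono pF.
  by apply/subsetP => e; rewrite !inE => /andP [].
have -> : [set e | Defs.lift0 e \in F :|: G] =
    [set e | Defs.lift0 e \in F] :|: [set e | Defs.lift0 e \in G].
  by apply/setP => e; rewrite !inE.
have -> : [set e | Defs.lift0 e \in F :&: G] =
    [set e | Defs.lift0 e \in F] :&: [set e | Defs.lift0 e \in G].
  by apply/setP => e; rewrite !inE.
exact: hfsub.
Qed.

Lemma ES_setU X Y : ES E0 (X :|: Y) = ES E0 X :|: ES E0 Y.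
Proof.
apply/setP => e; rewrite in_setU !in_ES.
by case: (e \in Em E0); rewrite //= in_setU.
Qed.

Lemma ES_setI X Y : ES E0 (X :&: Y) = ES E0 X :&: ES E0 Y.
Proof.
apply/setP => e; rewrite in_setI !in_ES.
by case: (e \in Em E0); rewrite //= in_setI.
Qed.

Definition fESj j S := fext E0 f j (ES E0 S :&: Emj E0 j).
Definition fES S := fm E0 f (ES E0 S).

Lemma fESj_polymatroid j : polymatroid_on setT (fESj j).
Proof.
have [f0 fmono fsub] := fext_polymatroid j; split.
- rewrite /fESj -[RHS]f0; congr (fext _ _ _ _).
  by apply/setP => e; rewrite in_setI in_ES !in_set0 andbF.
- move=> X Y XY _; apply: fmono (subsetIr _ _); apply: setSI.
  by apply/subsetP => e; rewrite !in_ES => /andP [-> /(subsetP XY)].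
move=> X Y _ _; rewrite /fESj ES_setU ES_setI setIUl setIIl.
by apply: fsub; apply: subsetIr.
Qed.

Lemma fES_polymatroid : polymatroid_on setT fES.
Proof. exact: polymatroid_on_sum fESj_polymatroid. Qed.

Lemma Hset_irr i : i \notin Hset v rho i.
Proof. by rewrite inE ltxx ltnn andbF. Qed.

Lemma Hset_trans i j k : j \in Hset v rho i -> k \in Hset v rho j -> k \in Hset v rho i.
Proof.
rewrite !inE => /orP [ij|/andP [/eqP ij ji]] /orP [jk|/andP [/eqP jk kj]].
- by rewrite (lt_trans ij jk).
- by rewrite jk ij.
- by rewrite -ij jk.
- by rewrite jk ij eqxx (ltn_trans kj ji) orbT.
Qed.

Lemma Hset_total i k : i != k -> k \in Hset v rho i \/ i \in Hset v rho k.
Proof.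
move=> ik; rewrite !inE.
case: (ltgtP (vm v rho i) (vm v rho k)) => _ /=; [by left|by right|].
case: (ltngtP k i) => [||/val_inj ki]; [by left|by right|].
by rewrite ki eqxx in ik.
Qed.

Lemma vm_le_Hset i k : k \in Hset v rho i -> vm v rho i <= vm v rho k.
Proof. by rewrite inE => /orP [/ltW //|/andP [/eqP -> _]]. Qed.

Lemma vm_ge0 i : 0 <= vm v rho i.
Proof. by rewrite /vm; case: split => a; apply: ltW. Qed.

Definition budget_cap (i : N) (t : R) : R :=
  if split i is inl k then Num.min t (B k / v k) else t.

Lemma budget_cap_le i t : budget_cap i t <= t.
Proof. by rewrite /budget_cap; case: split => // k; rewrite ge_min lexx. Qed.

Lemma lwterm_budget_cap i t : lwterm v B rho i t = vm v rho i * budget_cap i t.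
Proof.
rewrite /lwterm /vm /budget_cap; case: split => // k.
by rewrite minr_pMr ?ltW // [v k * (B k / v k)]mulrC divfK ?lt0r_neq0.
Qed.

Lemma vedge_in_Em j : vedge n j \in Em E0.
Proof. by rewrite in_setU imset_f ?orbT. Qed.

Lemma wsum_ES1 w i : (forall e, e \notin Em E0 -> w e = 0) ->
  wsum w (ES E0 [set i]) = \sum_j w (i, j).
Proof.
move=> w0; have -> : wsum w (ES E0 [set i]) = \sum_(e | e.1 == i) w e.
  rewrite /wsum big_mkcond [RHS]big_mkcond; apply: eq_bigr => e _.
  by rewrite in_ES in_set1; case: (boolP (e \in Em E0)) => [_|/w0 ->] //=; rewrite if_same.
rewrite -(@big_pred1_eq R 0 +%R N i (fun a => \sum_j w (a, j))) pair_big /=.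
by apply: eq_big => [[a b]|[a b]]; rewrite ?andbT.
Qed.

Lemma sum_wsum_ES1 w S : \sum_(i in S) wsum w (ES E0 [set i]) = wsum w (ES E0 S).
Proof.
rewrite /wsum [RHS](partition_big (fun e : Edge n m => e.1) (fun i => i \in S)) => [|e].
  apply: eq_bigr => i iS; apply: eq_bigl => e; rewrite !in_ES in_set1.
  by case: (e.1 =P i) => [->|]; rewrite ?iS ?andbT ?andbF.
by rewrite in_ES => /andP [].
Qed.

Lemma wsum_split_sellers w S : wsum w (ES E0 S) = \sum_j wsum w (ES E0 S :&: Emj E0 j).
Proof.
rewrite /wsum (partition_big (fun e : Edge n m => e.2) xpredT) //.
apply: eq_bigr => j _; apply: eq_bigl => e; rewrite in_setI in_Emj in_ES.
by case: (e \in Em E0).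
Qed.

Lemma inP_buyer_sums w : inP E0 f w ->
  forall S, \sum_(i in S) wsum w (ES E0 [set i]) <= fES S.
Proof.
move=> [_ _ w_le] S; rewrite sum_wsum_ES1 wsum_split_sellers.
by apply: ler_sum => j _; apply: w_le (subsetIr _ _).
Qed.

Lemma ES_image_fst j F : F \subset Emj E0 j -> ES E0 [set e.1 | e in F] :&: Emj E0 j = F.
Proof.
move=> FE; apply/setP => e; rewrite in_setI in_ES in_Emj; apply/idP/idP.
  case/andP => /andP [_ /imsetP [e' e'F e1]] /andP [_ /eqP e2].
  have := subsetP FE _ e'F; rewrite in_Emj => /andP [_ /eqP e'2].
  by move: e1 e2 e'F; rewrite -{}e'2; case: e => a b /= -> ->; case: e'.
move=> eF; have := subsetP FE _ eF; rewrite in_Emj => /andP [-> ->].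
by rewrite andbT imset_f.
Qed.

Lemma in_polymatroid_fESj_eq0 j y i :
  in_polymatroid setT (fESj j) y -> (i, j) \notin Em E0 -> y i = 0.
Proof.
move=> [y_ge0 y_le] ijE; have := y_le [set i] (subsetT _); rewrite big_set1.
have [fext0 _ _] := fext_polymatroid j.
have -> : fESj j [set i] = 0.
  rewrite /fESj -[RHS]fext0; congr (fext _ _ _ _); apply/setP => -[a b].
  rewrite in_setI in_ES in_Emj in_set1 in_set0 /=.
  by case: (a =P i) => [->|]; case: (b =P j) => [->|]; rewrite ?(negbTE ijE) ?andbF.
by have := y_ge0 i (in_setT i); lra.
Qed.

Lemma exists_allocation x : in_polymatroid setT fES x ->
  exists w, inP E0 f w /\ forall i, wsum w (ES E0 [set i]) = x i.
Proof.
move=> xP.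
have [y [y_sum yP]] := polymatroid_bigsum_split (index_enum_uniq 'I_m) fESj_polymatroid xP.
have y0 j i : (i, j) \notin Em E0 -> y j i = 0.
  exact: in_polymatroid_fESj_eq0 (yP j (mem_index_enum j)).
pose w e := if e \in Em E0 then y e.2 e.1 else 0.
have w_ij i j : w (i, j) = y j i by rewrite /w; case: ifP => // /negbT /y0.
exists w; split.
  split=> [e /negbTE|e|j F FE]; rewrite /w.
  - by move=> ->.
  - by case: ifP => // _; have [y_ge0 _] := yP e.2 (mem_index_enum _); apply: y_ge0.
  rewrite /wsum (eq_bigr (fun e => y j e.1)) => [|e eF]; last first.
    by have := subsetP FE _ eF; rewrite in_Emj => /andP [-> /eqP ->].
  rewrite -(big_imset _ (h := fst)) /=; last first.
    move=> [a b] [a' b'] /(subsetP FE) + /(subsetP FE).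
    by rewrite !in_Emj => /andP [_ /eqP /= ->] /andP [_ /eqP /= ->] /= ->.
  have [_ y_le] := yP j (mem_index_enum j).
  by have := y_le _ (subsetT [set e.1 | e in F]); rewrite /fESj ES_image_fst.
move=> i; rewrite wsum_ES1 => [|e /negbTE]; last by rewrite /w => ->.
by under eq_bigr do rewrite w_ij; apply: y_sum; rewrite inE.
Qed.

Section GreedyAllocation.
Variable xs : N -> R.
Hypothesis hxs : forall i, xs i = xrhs E0 f v B rho xs i.

Definition greedy_bound k :=
  \big[Num.min/fES [set k]]_(Hk : {set N} | Hk \subset Hset v rho k)
    (fES (k |: Hk) - \sum_(l in Hk) xs l).

Definition capped i := exists2 k, split i = inl k & xs i = B k / v k.

Lemma xs_budget_cap k : xs k = budget_cap k (greedy_bound k).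
Proof. by rewrite {1}hxs /xrhs /budget_cap; case: split => // k'; rewrite minC. Qed.

Lemma xs_prefix_le k (Hk : {set N}) : Hk \subset Hset v rho k ->
  xs k + \sum_(l in Hk) xs l <= fES (k |: Hk).
Proof.
move=> HkH; have : greedy_bound k <= fES (k |: Hk) - \sum_(l in Hk) xs l.
  by rewrite /greedy_bound; apply: bigmin_le_cond.
by have := budget_cap_le k (greedy_bound k); rewrite -xs_budget_cap; lra.
Qed.

Lemma xs_sum_le S : \sum_(i in S) xs i <= fES S.
Proof.
have [fES0 _ _] := fES_polymatroid.
apply: (sum_le_of_prefix_bound Hset_irr Hset_trans Hset_total).
  by rewrite fES0.
exact: xs_prefix_le.
Qed.

Lemma xs_ge0 k : 0 <= xs k.
Proof.
have [fES0 fES_mono _] := fES_polymatroid.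
have bound_ge0 : 0 <= greedy_bound k.
  apply: le_bigmin => [|Hk _]; first by rewrite -fES0 fES_mono ?sub0set.
  by rewrite subr_ge0 (le_trans (xs_sum_le Hk)) ?fES_mono ?subsetU1.
rewrite xs_budget_cap /budget_cap; case: split => // k'.
by rewrite le_min bound_ge0 divr_ge0 // ltW.
Qed.

Lemma xs_in_polymatroid : in_polymatroid setT fES xs.
Proof. by split=> [i _|S _]; [exact: xs_ge0 | exact: xs_sum_le]. Qed.

Lemma xs_le_budget k k' : split k = inl k' -> xs k <= B k' / v k'.
Proof. by move=> sk; rewrite xs_budget_cap /budget_cap sk ge_min lexx orbT. Qed.

Lemma budget_cap_xs i : budget_cap i (xs i) = xs i.
Proof.
by rewrite /budget_cap; case sk: split => [k|//]; apply/min_idPl; apply: xs_le_budget.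
Qed.

Lemma xs_capped_or_tight k :
  capped k \/ exists2 Hk : {set N}, Hk \subset Hset v rho k & tight fES xs (k |: Hk).
Proof.
pose F Hk := fES (k |: Hk) - \sum_(l in Hk) xs l.
have [Hk HkH bound_eq] : exists2 Hk : {set N}, Hk \subset Hset v rho k & greedy_bound k = F Hk.
  have := bigmin_attained (P := fun Hk : {set N} => Hk \subset Hset v rho k) F (sub0set _).
  by rewrite /F setU0 big_set0 subr0.
have tight_Hk : xs k = F Hk -> tight fES xs (k |: Hk).
  move=> xk; rewrite /tight big_setU1 /=; first by rewrite xk /F subrK.
  by apply: contra (Hset_irr k) => /(subsetP HkH).
have := xs_budget_cap k; rewrite /budget_cap bound_eq.
case sk: (split k) => [k'|j] xk; last by right; exists Hk => //; apply: tight_Hk.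
move: xk; rewrite minEle; case: ifP => _ xk; last by left; exists k'.
by right; exists Hk => //; apply: tight_Hk.
Qed.

Lemma LW_le_greedy w :
  inP E0 f w -> LW E0 v B rho w <= \sum_(i < n + m) lwterm v B rho i (xs i).
Proof.
move=> wP; have [fES0 _ fES_sub] := fES_polymatroid; rewrite /LW.
have -> : \sum_i lwterm v B rho i (xs i) = \sum_i vm v rho i * xs i.
  by apply: eq_bigr => i _; rewrite lwterm_budget_cap budget_cap_xs.
under eq_bigr do rewrite lwterm_budget_cap.
apply: (weighted_sum_le_greedy Hset_irr Hset_trans Hset_total fES_sub fES0 xs_sum_le
          xs_capped_or_tight vm_le_Hset vm_ge0).
- move=> S; apply: le_trans (inP_buyer_sums wP S).
  by apply: ler_sum => i _; apply: budget_cap_le.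
- by move=> k [k' sk ->]; rewrite /budget_cap sk ge_min lexx orbT.
Qed.

Lemma fES_virtual S : (forall j, rshift n j \in S) -> fES S = fES setT.
Proof.
move=> virtS; apply: eq_bigr => j _; rewrite /fext.
have vedge_in S' : rshift n j \in S' -> vedge n j \in ES E0 S' :&: Emj E0 j.
  by move=> jS'; rewrite in_setI in_ES in_Emj vedge_in_Em jS' eqxx.
by rewrite !vedge_in ?in_setT.
Qed.

Lemma sum_greedy_eq_fES : \sum_(i < n + m) xs i = fES setT.
Proof.
have [fES0 _ fES_sub] := fES_polymatroid.
have [T [_ tT T_capped]] := exists_maximal_tight fES_sub fES0 xs_sum_le xs_capped_or_tight
  (Q := setT) (fun k _ => subsetT _).
have virtT j : rshift n j \in T.
  apply/negPn/negP => jT; have [k' + _] := T_capped _ (in_setT _) jT.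
  by rewrite (unsplitK (inr j : 'I_n + 'I_m)).
rewrite -sum_setT; apply/eqP; rewrite eq_le xs_sum_le /= -(fES_virtual virtT) -tT.
rewrite [X in _ <= X](big_setID T) /= setTI lerDl.
by apply: sumr_ge0 => i _; exact: xs_ge0.
Qed.

End GreedyAllocation.
End Market.

Theorem proposition2p1 (R : realFieldType) (n m : nat)
  (E0 : {set 'I_n * 'I_m}) (f : 'I_m -> {set 'I_n * 'I_m} -> R)
  (v : 'I_n -> R) (B : 'I_n -> R) (rho : 'I_m -> R)
  (hv : forall i, 0 < v i) (hB : forall i, 0 <= B i) (hrho : forall j, 0 < rho j)
  (hf0 : forall j, f j set0 = 0)
  (hfpos : forall j (F : {set 'I_n * 'I_m}), F \subset E0j E0 j -> 0 <= f j F)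
  (hfmono : forall j (F G : {set 'I_n * 'I_m}), F \subset G -> G \subset E0j E0 j -> f j F <= f j G)
  (hfsub : forall j (F G : {set 'I_n * 'I_m}), F \subset E0j E0 j -> G \subset E0j E0 j ->
      f j (F :|: G) + f j (F :&: G) <= f j F + f j G)
  (xs : 'I_(n + m) -> R)
  (hxs : forall i, xs i = xrhs E0 f v B rho xs i) :
  (exists ws : Edge n m -> R,
     [/\ inP E0 f ws,
         forall i, wsum ws (ES E0 [set i]) = xs i,
         LW E0 v B rho ws = \sum_(i < n + m) lwterm v B rho i (xs i) &
         forall w, inP E0 f w -> LW E0 v B rho w <= \sum_(i < n + m) lwterm v B rho i (xs i)])
  /\ \sum_(i < n + m) xs i = fm E0 f (ES E0 setT).
Proof.
have xsP := xs_in_polymatroid hv hB hf0 hfmono hfsub hxs.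
have [ws [wsP ws_xs]] := exists_allocation hf0 hfmono hfsub xsP.
split; last exact: (sum_greedy_eq_fES hv hB hf0 hfmono hfsub hxs).
exists ws; split=> //; first by apply: eq_bigr => i _; rewrite ws_xs.
exact: (LW_le_greedy hv hrho hf0 hfmono hfsub hxs).
Qed.
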